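(* Let $\mathcal{N}$ be a non-degenerate GFNN with $D$-dimensional output, let $\rho$ be a nonlinearity, and let $A,B$ be disjoint sets of nodes of $\mathcal{N}$ with a common parent set such that $\mathcal{N}$ admits a $(\rho;A,B,C)$-modification. Then there exists a set $B^*\subset B$ such that $\mathcal{N}$ admits a non-degenerate $(\rho;A\cup B^*,B\setminus B^*,C)$-modification $\mathcal{N}'$.
   Context: A nonlinearity is a continuous $\rho:\mathbb{R}\to\mathbb{R}$ not of the form $t\mapsto at+b$. GFNN with $D$-dim output: $\mathcal{N}=(V,E,V_{\mathrm{in}},V_{\mathrm{out}},\Omega,\Theta,\Lambda)$, $(V,E)$ finite loopless DAG, $V_{\mathrm{in}}$ the parentless nodes, $V_{\mathrm{out}}\subset V\setminus V_{\mathrm{in}}$, nonzero real weights $\omega_{\tilde vv}$ on edges $(v,\tilde v)$, real biases $\theta_v$ on non-input nodes, real output scalars $\lambda^{(r)},\lambda^{(r)}_w$. $\mathrm{anc}(S)$: nodes with a directed path (length $\ge0$) into $S$. Non-degenerate: $V\setminus V_{\mathrm{in}}\subset\mathrm{anc}(V_{\mathrm{out}})$ and each $w\in V_{\mathrm{out}}$ has some $\lambda^{(r)}_w\ne0$. Affine symmetry of $\rho$: $(\zeta,\{(\alpha_s,\beta_s,\gamma_s)\}_{s\in\mathcal{I}})$, $\mathcal{I}$ nonempty finite, $\sum_s\alpha_s\rho(\beta_st+\gamma_s)=\zeta$ $\forall t$, no proper $\mathcal{I}'$ with $\{\rho(\beta_s\cdot+\gamma_s)\}_{\mathcal{I}'}\cup\{\mathbf1\}$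 linearly dependent. Irreducible: there is no nonempty $U$ with common parent set $P_U$, nonzero $\kappa_v,\beta_u$ with $\omega_{uv}=\beta_u\kappa_v$, and $\zeta$, nonzero $\alpha_u$ with $(\zeta,\{(\alpha_u,\beta_u,\theta_u)\}_{u\in U})$ an affine symmetry. $(\rho;A,B,C)$-modification of an irreducible $\mathcal{N}$: $A,B\subset V\setminus V_{\mathrm{in}}$ disjoint, $A\ne\varnothing$, common parent set $P$, $W=\{w:\mathrm{par}(w)\cap A\ne\varnothing\}$, $C=\{u'_1,\dots,u'_n\}$ ($n\ge1$) new nodes; require (i) an affine symmetry $(\zeta,\{(\alpha_u,\beta_u,\theta_u)\}_{u\in A\cup B}\cup\{(\alpha'_p,\beta'_p,\gamma'_p)\}_{p=1}^n)$; (ii) nonzero $\kappa_v$ with $\omega_{uv}=\beta_u\kappa_v$ ($u\in A\cup B,v\in P$); (iii) $A\subset\mathrm{par}(w)$ for $w\in W$, nonzero $\nu_w$ with $\omega_{wu}=\nu_w\alpha_u$; (iv) $A\cap V_{\mathrm{out}}=\varnothing$, or $A\subset V_{\mathrm{out}}$ with reals $\mu_r$, $\lambda^{(r)}_u=\mu_r\alpha_u$. Then: delete $A$ and incident edges; add $C$ with edges $(v,u'_p)$ of weight $\beta'_p\kappa_v$, bias $\gamma'_p$, edges $(u'_p,w)$ of weight $-\alpha'_p\nu_w$; $\theta_w\mapsto\theta_w+\zeta\nu_w$; for $w\in W,u\in B$: add edge with weight $-\alpha_u\nu_w$ if absent, else $\omega_{wu}\mapsto\omega_{wu}-\alpha_u\nu_w$,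 deleting the edge if $0$. If $A\subset V_{\mathrm{out}}$: $\lambda^{(r)}\mapsto\lambda^{(r)}+\zeta\mu_r$, $\lambda^{(r)}_{u'_p}=-\alpha'_p\mu_r$, for $u\in B$ $\lambda^{(r)}_u$ ($0$ if $u\notin V_{\mathrm{out}}$) $\mapsto\lambda^{(r)}_u-\alpha_u\mu_r$, new output set $(V_{\mathrm{out}}\setminus(A\cup B))\cup C\cup\{u\in B:\text{some new }\lambda^{(r)}_u\ne0\}$; else outputs unchanged. $\mathcal{N}$ admits a $(\rho;A,B,C)$-modification if such data exist. *)

From HB Require Import structures.
From mathcomp Require Import all_boot all_order all_algebra.
From mathcomp Require Import finmap.
From mathcomp Require Import all_classical all_reals all_analysis.

Set Implicit Arguments.
Unset Strict Implicit.
Unset Printing Implicit Defensive.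

Import Order.TTheory GRing.Theory Num.Theory.
Import numFieldNormedType.Exports.
Local Open Scope fset_scope.
Local Open Scope ring_scope.

Definition nonlinearity (R : realType) (rho : R -> R) : Prop :=
  continuous rho /\ ~ (exists a b : R, forall t, rho t = a * t + b).

(* Nodes are natural numbers; [nodes] is the finite node set V.
   [wt v' v] is the weight omega_{v' v} of the edge (v, v'); the edge set
   is E = {(v,v') | wt v' v <> 0} (weights on edges are nonzero).
   [bias v] = theta_v (only meaningful on non-input nodes).
   [outs] = V_out, [lam0 r] = lambda^(r), [lam r w] = lambda^(r)_w. *)
Record gfnn (R : realType) (D : nat) := Gfnn {
  nodes : {fset nat};
  wt : nat -> nat -> R;
  bias : nat -> R;
  outs : {fset nat};
  lam0 : 'I_D -> R;
  lam : 'I_D -> nat -> R }.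

Section Defs.
Variables (R : realType) (D : nat).

Definition gfnn_par (N : gfnn R D) (v : nat) : {fset nat} :=
  [fset u in nodes N | wt N v u != 0].

Definition gfnn_inputs (N : gfnn R D) : {fset nat} :=
  [fset v in nodes N | gfnn_par N v == fset0].

Definition is_gfnn (N : gfnn R D) : Prop :=
  [/\ (forall u v, wt N v u != 0 -> (u \in nodes N) && (v \in nodes N)),
      (exists rk : nat -> nat, forall u v, wt N v u != 0 -> (rk u < rk v)%N),
      outs N `<=` nodes N `\` gfnn_inputs N
    & (forall r w, lam N r w != 0 -> w \in outs N)].

Inductive gfnn_reach (N : gfnn R D) : nat -> nat -> Prop :=
  | reach0 u : gfnn_reach N u u
  | reachS u v w : wt N v u != 0 -> gfnn_reach N v w -> gfnn_reach N u w.

Definition in_anc (N : gfnn R D) (S : {fset nat}) (v : nat) : Prop :=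
  v \in nodes N /\ exists2 w, w \in S & gfnn_reach N v w.

Definition gfnn_nondegenerate (N : gfnn R D) : Prop :=
  (forall v, v \in nodes N `\` gfnn_inputs N -> in_anc N (outs N) v) /\
  (forall w, w \in outs N -> exists r, lam N r w != 0).

Definition affsym (rho : R -> R) (zeta : R) (S : {fset nat})
    (a b g : nat -> R) : Prop :=
  [/\ S != fset0,
      (forall t, \sum_(s <- S) a s * rho (b s * t + g s) = zeta)
    & (forall S', S' `<` S -> forall (c : nat -> R) (c0 : R),
         (forall t, \sum_(s <- S') c s * rho (b s * t + g s) + c0 = 0) ->
         c0 = 0 /\ (forall s, s \in S' -> c s = 0))].

Definition gfnn_irreducible (rho : R -> R) (N : gfnn R D) : Prop :=
  ~ exists (U P : {fset nat}) (kappa beta alpha : nat -> R) (zeta : R),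
      [/\ U != fset0, U `<=` nodes N `\` gfnn_inputs N,
          (forall u, u \in U -> gfnn_par N u = P),
          (forall v, v \in P -> kappa v != 0)
        & [/\ (forall u, u \in U -> beta u != 0 /\ alpha u != 0),
               (forall u v, u \in U -> v \in P -> wt N u v = beta u * kappa v)
             & affsym rho zeta U alpha beta (bias N)]].

Definition Wset (N : gfnn R D) (A : {fset nat}) : {fset nat} :=
  [fset w in nodes N | gfnn_par N w `&` A != fset0].

(* The modified network (construction of the (rho;A,B,C)-modification
   from its data).  P is the common parent set of A u B. *)
Definition modnet (N : gfnn R D) (A B C P : {fset nat}) (zeta : R)
    (alpha beta gamma kappa nu : nat -> R) (mu : 'I_D -> R) : gfnn R D :=
  let W := Wset N A in
  let wt' := fun x y =>
    if (x \in A) || (y \in A) then 0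
    else if x \in C then (if y \in P then beta x * kappa y else 0)
    else if y \in C then (if x \in W then - (alpha y * nu x) else 0)
    else if (x \in W) && (y \in B) then wt N x y - alpha y * nu x
    else wt N x y in
  let bias' := fun x =>
    if x \in W then bias N x + zeta * nu x
    else if x \in C then gamma x else bias N x in
  let lamA := fun r u =>
    if u \in C then - (alpha u * mu r)
    else if u \in B then lam N r u - alpha u * mu r
    else if u \in A then 0 else lam N r u in
  if A `<=` outs N then
    Gfnn ((nodes N `\` A) `|` C) wt' bias'
      (((outs N `\` (A `|` B)) `|` C) `|`
         [fset u in B | [exists r : 'I_D, lamA r u != 0]])
      (fun r => lam0 N r + zeta * mu r) lamA
  else
    Gfnn ((nodes N `\` A) `|` C) wt' bias' (outs N) (lam0 N) (lam N).

Definition is_modification (rho : R -> R) (N : gfnn R D) (A B C : {fset nat})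
    (N' : gfnn R D) : Prop :=
  gfnn_irreducible rho N /\
  exists (P : {fset nat}) (zeta : R) (alpha beta gamma kappa nu : nat -> R)
         (mu : 'I_D -> R),
    [/\ [/\ A `<=` nodes N `\` gfnn_inputs N, B `<=` nodes N `\` gfnn_inputs N,
            A `&` B == fset0, A != fset0
          & (forall u, u \in A `|` B -> gfnn_par N u = P)],
        C != fset0 /\ C `&` nodes N == fset0,
        affsym rho zeta (A `|` B `|` C) alpha beta gamma /\
          (forall u, u \in A `|` B -> gamma u = bias N u),
        (forall v, v \in P -> kappa v != 0) /\
          (forall u v, u \in A `|` B -> v \in P -> wt N u v = beta u * kappa v)
      & [/\
        (forall w, w \in Wset N A ->
           [/\ A `<=` gfnn_par N w, nu w != 0
             & forall u, u \in A -> wt N w u = nu w * alpha u]),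
        (A `&` outs N == fset0 \/
           (A `<=` outs N /\ forall r u, u \in A -> lam N r u = mu r * alpha u))
          & N' = modnet N A B C P zeta alpha beta gamma kappa nu mu]].

End Defs.

(* The set [B^*] consists of the nodes of [B] whose outgoing weights and output scalars are
   exactly what the modification subtracts, so that it would leave them dangling.  Moving them
   into [A] gives a modification with the same data.  In the new network every node still
   reaches an output: a node outside [A ∪ B] follows its old path, leaving it through the new
   nodes [C] when the path enters [A ∪ B] (the parents of [A ∪ B] form [P], which feeds [C]);
   the nodes of [C] are outputs or feed the children of [A]; and a node of [B \ B^*] keeps an
   outgoing edge or a nonzero output scalar precisely because it is not in [B^*]. *)

From HB Require Import structures.
From mathcomp Require Import all_boot all_order all_algebra finmap.
From mathcomp Require Import all_classical all_reals all_analysis.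
From mathcomp Require Import ring zify.
From Stdlib Require Import Wf_nat.

Import Order.TTheory GRing.Theory Num.Theory.
Local Open Scope fset_scope.

Set Implicit Arguments.
Unset Strict Implicit.

Section AffineSymmetry.
Variables (R : realType) (rho : R -> R) (zeta : R) (S : {fset nat}) (a b g : nat -> R).
Hypothesis Haff : affsym rho zeta S a b g.
Local Open Scope ring_scope.

Lemma affsym_const_term s k : s \in S ->
  (forall t, a s * rho (b s * t + g s) = k) -> forall x, x \in S `\ s -> a x = 0.
Proof.
case: Haff => _ Hsum Hmin Hs Hk.
have [t|_ //] := Hmin _ (fproperD1 Hs) a (k - zeta).
by rewrite -(Hsum t) (big_fsetD1 _ Hs) /= Hk; ring.
Qed.

Lemma affsym_coef_neq0 s0 : s0 \in S -> a s0 != 0 -> forall s, s \in S -> a s != 0.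
Proof.
move=> Hs0 Has0 s Hs; apply: contraNneq Has0 => Has.
have [->|Hne] := eqVneq s0 s; first exact/eqP.
apply/eqP; apply: (affsym_const_term (k := 0) Hs) => [t|]; first by rewrite Has mul0r.
by rewrite in_fsetD1 Hne.
Qed.

Lemma affsym_scale_neq0 s0 s1 : s0 \in S -> s1 \in S -> s0 != s1 -> a s0 != 0 ->
  forall s, s \in S -> b s != 0.
Proof.
move=> Hs0 Hs1 Hne Has0 s Hs; apply/eqP => Hbs.
have [x Hx] : exists x, x \in S `\ s.
  have [->|Hs0s] := eqVneq s s0; first by exists s1; rewrite in_fsetD1 eq_sym Hne.
  by exists s0; rewrite in_fsetD1 eq_sym Hs0s.
have Hconst t : a s * rho (b s * t + g s) = a s * rho (g s) by rewrite Hbs mul0r add0r.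
move: (Hx); rewrite in_fsetD1 => /andP[_ HxS].
by move: (affsym_coef_neq0 Hs0 Has0 HxS); rewrite (affsym_const_term Hs Hconst Hx) eqxx.
Qed.

End AffineSymmetry.

Section NetworkFacts.
Variables (R : realType) (D : nat) (N : gfnn R D).
Local Open Scope ring_scope.

Lemma in_gfnn_par u v : (u \in gfnn_par N v) = (u \in nodes N) && (wt N v u != 0).
Proof. by rewrite !inE. Qed.

Lemma gfnn_reachP u w :
  gfnn_reach N u w -> u = w \/ exists2 v, wt N v u != 0 & gfnn_reach N v w.
Proof. by case=> [x|x v y Hxv Hvy]; [left | right; exists v]. Qed.

Lemma in_anc_out (S : {fset nat}) v : v \in nodes N -> v \in S -> in_anc N S v.
Proof. by move=> Hv HvS; split=> //; exists v => //; apply: reach0. Qed.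

Lemma in_anc_edge (S : {fset nat}) u v :
  u \in nodes N -> wt N v u != 0 -> in_anc N S v -> in_anc N S u.
Proof. by move=> Hu Huv [_ [w Hw Hvw]]; split=> //; exists w => //; apply: reachS Hvw. Qed.

Hypothesis HN : is_gfnn N.

Lemma gfnn_edge_nodes u v : wt N v u != 0 -> u \in nodes N /\ v \in nodes N.
Proof. by case: HN => Hedge _ _ _ /Hedge /andP. Qed.

Lemma gfnn_outs_nodes w : w \in outs N -> w \in nodes N.
Proof. by case: HN => _ _ /fsubsetP Houts _ /Houts; rewrite in_fsetD => /andP[]. Qed.

Lemma gfnn_no_loop u : wt N u u = 0.
Proof. by case: HN => _ [rk Hrk] _ _; apply: (contraNeq (Hrk u u)); rewrite ltnn. Qed.

Lemma gfnn_edge_noninput u v : wt N v u != 0 -> v \notin gfnn_inputs N.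
Proof.
move=> Huv; rewrite !inE negb_and orbC; apply/orP; left.
by apply/fset0Pn; exists u; rewrite in_gfnn_par Huv (gfnn_edge_nodes Huv).1.
Qed.

(* Ranks increase along edges and are bounded on the finite node set. *)
Lemma gfnn_child_wf : well_founded (fun v u => wt N v u != 0).
Proof.
case: HN => _ [rk Hrk] _ _; pose M := (\max_(u <- nodes N) rk u)%N.
apply: (well_founded_lt_compat _ (fun v => M - rk v)%N) => v u Huv.
have Hv : (rk v <= M)%N by apply: leq_bigmax_seq => //; apply: (gfnn_edge_nodes Huv).2.
by have := Hrk _ _ Huv; lia.
Qed.

End NetworkFacts.

Section Absorb.
Variables (R : realType) (D : nat) (rho : R -> R) (N : gfnn R D).
Variables (A B C P : {fset nat}) (zeta : R) (alpha beta gamma kappa nu : nat -> R).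
Variable mu : 'I_D -> R.
Local Open Scope ring_scope.
Hypotheses (HN : is_gfnn N) (HNnd : gfnn_nondegenerate N) (Hirr : gfnn_irreducible rho N).
Hypotheses (HA : A `<=` nodes N `\` gfnn_inputs N) (HB : B `<=` nodes N `\` gfnn_inputs N).
Hypotheses (HAB : A `&` B == fset0) (HA0 : A != fset0).
Hypothesis HPar : forall u, u \in A `|` B -> gfnn_par N u = P.
Hypotheses (HC0 : C != fset0) (HCN : C `&` nodes N == fset0).
Hypothesis Haff : affsym rho zeta (A `|` B `|` C) alpha beta gamma.
Hypothesis Hgam : forall u, u \in A `|` B -> gamma u = bias N u.
Hypothesis Hkap : forall v, v \in P -> kappa v != 0.
Hypothesis Hwt : forall u v, u \in A `|` B -> v \in P -> wt N u v = beta u * kappa v.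
Hypothesis HW : forall w, w \in Wset N A ->
  [/\ A `<=` gfnn_par N w, nu w != 0 & forall u, u \in A -> wt N w u = nu w * alpha u].
Hypothesis Hout : A `&` outs N == fset0 \/
  (A `<=` outs N /\ forall r u, u \in A -> lam N r u = mu r * alpha u).
Local Notation W := (Wset N A).

Lemma AB_nodes x : x \in A `|` B -> x \in nodes N.
Proof. by rewrite in_fsetU => /orP[/(fsubsetP HA)|/(fsubsetP HB)]; rewrite in_fsetD => /andP[]. Qed.

Lemma B_notin_A x : x \in B -> x \notin A.
Proof. by move=> HxB; apply/negP => HxA; move/eqP/fsetP/(_ x): HAB; rewrite !inE HxA HxB. Qed.

Lemma node_notin_C x : x \in nodes N -> x \notin C.
Proof. by move=> Hx; apply/negP => Hc; move/eqP/fsetP/(_ x): HCN; rewrite !inE Hx Hc. Qed.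

Lemma mem_P x v : x \in A `|` B -> (v \in P) = (v \in nodes N) && (wt N x v != 0).
Proof. by move=> Hx; rewrite -(HPar Hx) in_gfnn_par. Qed.

Lemma AB_notin_P x : x \in A `|` B -> x \notin P.
Proof. by move=> Hx; rewrite (mem_P _ Hx) gfnn_no_loop // eqxx andbF. Qed.

Lemma wt_AB x y : x \in A `|` B -> y \in A `|` B -> wt N y x = 0.
Proof.
move=> Hx Hy; apply/eqP; apply: contraNT (AB_notin_P Hx) => Hyx.
by rewrite (mem_P _ Hy) (AB_nodes Hx).
Qed.

Lemma mem_W w a : a \in A -> wt N w a != 0 -> w \in W.
Proof.
move=> Ha Hwa; rewrite !inE (gfnn_edge_nodes HN Hwa).2 /=.
by apply/fset0Pn; exists a; rewrite !inE Hwa Ha AB_nodes // in_fsetU Ha.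
Qed.

Lemma W_nodes w : w \in W -> w \in nodes N.
Proof. by rewrite !inE => /andP[]. Qed.

Lemma wt_W_A w a : w \in W -> a \in A -> wt N w a != 0.
Proof. by move=> Hw Ha; case: (HW Hw) => /fsubsetP/(_ a Ha); rewrite in_gfnn_par => /andP[]. Qed.

Lemma W_notin_AB w : w \in W -> w \notin A `|` B.
Proof.
have /fset0Pn[a0 Ha0] := HA0; move=> Hw; apply/negP => HwAB.
by move: (wt_W_A Hw Ha0); rewrite wt_AB ?eqxx // in_fsetU Ha0.
Qed.

Lemma W_noninput w : w \in W -> w \notin gfnn_inputs N.
Proof. by have /fset0Pn[a0 Ha0] := HA0; move=> Hw; apply: gfnn_edge_noninput (wt_W_A Hw Ha0). Qed.

Lemma lam_A : A `<=` outs N -> forall r u, u \in A -> lam N r u = mu r * alpha u.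
Proof.
case: Hout => [HAo|[] //]; have /fset0Pn[a0 Ha0] := HA0 => /fsubsetP/(_ a0 Ha0) Ha0o.
by move/eqP/fsetP/(_ a0): HAo; rewrite !inE Ha0 Ha0o.
Qed.

Lemma A_notin_outs : ~~ (A `<=` outs N) -> forall u, u \in A -> u \notin outs N.
Proof.
by case: Hout => [/eqP/fsetP HAo _ u Hu|[-> //]]; move: (HAo u); rewrite !inE Hu /= => ->.
Qed.

Lemma A_out_lam_neq0 a : A `<=` outs N -> a \in A -> exists r, mu r * alpha a != 0.
Proof. by move=> HAo Ha; have [r] := HNnd.2 a (fsubsetP HAo a Ha); rewrite lam_A //; exists r. Qed.

Lemma A_child a : ~~ (A `<=` outs N) -> a \in A -> exists2 w, w \in W & wt N w a != 0.
Proof.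
move=> HAo Ha; have [_ [y Hy Hay]] := HNnd.1 a (fsubsetP HA a Ha).
case/gfnn_reachP: Hay => [Hay|[w Hwa _]].
  by move: (A_notin_outs HAo Ha); rewrite Hay Hy.
by exists w => //; apply: mem_W Hwa.
Qed.

Lemma alpha_neq0 s : s \in A `|` B `|` C -> alpha s != 0.
Proof.
have /fset0Pn[a0 Ha0] := HA0; apply: (affsym_coef_neq0 Haff (s0 := a0)); first by rewrite !inE Ha0.
have [HAo|HAo] := boolP (A `<=` outs N).
  by have [r] := A_out_lam_neq0 HAo Ha0; rewrite mulf_eq0 negb_or => /andP[].
have [w Hw] := A_child HAo Ha0.
by case: (HW Hw) => _ _ ->; rewrite // mulf_eq0 negb_or => /andP[].
Qed.

Lemma beta_neq0 s : s \in A `|` B `|` C -> beta s != 0.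
Proof.
have /fset0Pn[a0 Ha0] := HA0; have /fset0Pn[c0 Hc0] := HC0.
have Sa0 : a0 \in A `|` B `|` C by rewrite !inE Ha0.
have Hac : a0 != c0.
  by apply: contraTneq Hc0 => <-; apply: node_notin_C; apply: AB_nodes; rewrite in_fsetU Ha0.
by apply: (affsym_scale_neq0 Haff Sa0 _ Hac (alpha_neq0 Sa0)); rewrite !inE Hc0 orbT.
Qed.

Lemma exists_mu_neq0 : A `<=` outs N -> exists r, mu r != 0.
Proof.
have /fset0Pn[a0 Ha0] := HA0 => HAo.
by have [r] := A_out_lam_neq0 HAo Ha0; rewrite mulf_eq0 negb_or => /andP[]; exists r.
Qed.

Definition absorbable (u : nat) : bool :=
  all (fun w => wt N w u == if w \in W then nu w * alpha u else 0) (nodes N) &&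
  (if A `<=` outs N then [forall r, lam N r u == mu r * alpha u] else u \notin outs N).

Definition absorbed : {fset nat} := [fset u in B | absorbable u].

Lemma absorbedP u : u \in absorbed ->
  [/\ u \in B, {in nodes N, forall w, wt N w u = if w \in W then nu w * alpha u else 0}
    & if A `<=` outs N then forall r, lam N r u = mu r * alpha u else u \notin outs N].
Proof.
rewrite inE => /andP[HuB /andP[/allP Hwt_u Hout_u]]; split=> // [w /Hwt_u/eqP //|].
by case: ifP Hout_u => // _ /forallP Hr r; apply/eqP.
Qed.

Lemma absorbed_sub : absorbed `<=` B.
Proof. by apply/fsubsetP => u /absorbedP[]. Qed.

Lemma absorbed_cover : A `|` absorbed `|` (B `\` absorbed) = A `|` B.
Proof.
apply/fsetP => x; rewrite !in_fsetU in_fsetD.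
by have [Hx|_] := boolP (x \in absorbed); rewrite /= ?orbF // (fsubsetP absorbed_sub x Hx) !orbT.
Qed.

Lemma Wset_absorbed : Wset N (A `|` absorbed) = W.
Proof.
have /fset0Pn[a0 Ha0] := HA0.
apply/fsetP => w; apply/idP/idP => [|Hw].
  rewrite inE => /andP[Hw /fset0Pn[x]]; rewrite in_fsetI in_gfnn_par in_fsetU.
  case/andP=> /andP[_ Hwx] /orP[Hx|Hx]; first exact: mem_W Hwx.
  have [_ Hwt_x _] := absorbedP Hx.
  by move: Hwx; rewrite Hwt_x //; case: ifP => //; rewrite eqxx.
rewrite inE; apply/andP; split; first exact: W_nodes.
apply/fset0Pn; exists a0.
by rewrite in_fsetI in_gfnn_par !in_fsetU Ha0 (wt_W_A Hw Ha0) AB_nodes // in_fsetU Ha0.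
Qed.

Lemma outs_absorbed : (A `|` absorbed `<=` outs N) = (A `<=` outs N).
Proof.
rewrite fsubUset; have [HAo|] //= := boolP (A `<=` outs N).
case: HN => _ _ _ Hlam; have [r Hr] := exists_mu_neq0 HAo.
apply/fsubsetP => u Hu; have [HuB _] := absorbedP Hu; rewrite HAo => Hlu.
by apply: (Hlam r); rewrite Hlu mulf_neq0 // alpha_neq0 // !inE HuB orbT.
Qed.

Local Notation N' :=
  (modnet N (A `|` absorbed) (B `\` absorbed) C P zeta alpha beta gamma kappa nu mu).

Lemma absorbed_modification : is_modification rho N (A `|` absorbed) (B `\` absorbed) C N'.
Proof.
have /fset0Pn[a0 Ha0] := HA0.
split=> //; exists P, zeta, alpha, beta, gamma, kappa, nu, mu.
rewrite absorbed_cover Wset_absorbed; split=> //; first split.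
- by rewrite fsubUset HA (fsubset_trans absorbed_sub HB).
- exact: fsubset_trans (fsubsetDl _ _) HB.
- apply/eqP/fsetP => x; rewrite in_fsetI in_fsetU in_fsetD in_fset0.
  case: (boolP (x \in absorbed)) => _ /=; rewrite ?andbF // orbF.
  by have [/B_notin_A/negbTE ->|] := boolP (x \in B); rewrite ?andbF.
- by apply/fset0Pn; exists a0; rewrite in_fsetU Ha0.
- exact: HPar.
split=> //.
- move=> w Hw; have [HAp Hnu HwA] := HW Hw; split=> //.
    rewrite fsubUset HAp /=; apply/fsubsetP => u Hu; have [HuB Hwu _] := absorbedP Hu.
    rewrite in_gfnn_par AB_nodes ?in_fsetU ?HuB ?orbT //= Hwu ?W_nodes // Hw.
    by rewrite mulf_neq0 // alpha_neq0 // !inE HuB orbT.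
  move=> u; rewrite in_fsetU => /orP[/HwA //|Hu].
  by have [_ Hwu _] := absorbedP Hu; rewrite Hwu ?W_nodes // Hw.
- have [HAo|HAo] := boolP (A `<=` outs N).
    right; split=> [|r u]; first by rewrite outs_absorbed.
    rewrite in_fsetU => /orP[/(lam_A HAo r) //|Hu].
    by have [_ _] := absorbedP Hu; rewrite HAo.
  left; apply/eqP/fsetP => x; rewrite in_fsetI in_fsetU in_fset0.
  have [Hxo|] := boolP (x \in outs N); rewrite ?andbF // andbT.
  apply/negbTE; rewrite negb_or; apply/andP; split.
    by apply: contraTN Hxo => /(A_notin_outs HAo).
  by apply: contraTN Hxo => /absorbedP[_ _]; rewrite (negbTE HAo).
Qed.

Local Notation A' := (A `|` absorbed).
Local Notation B' := (B `\` absorbed).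

Lemma notin_A' x : x \notin A `|` B -> x \notin A'.
Proof. by apply: contra; apply/fsubsetP; rewrite fsetUS // absorbed_sub. Qed.

Lemma B'_notin_A' x : x \in B' -> x \notin A'.
Proof. by rewrite in_fsetD in_fsetU => /andP[/negbTE -> /B_notin_A/negbTE ->]. Qed.

Lemma notin_B' x : x \notin A `|` B -> x \notin B'.
Proof. by rewrite in_fsetU in_fsetD negb_or => /andP[_ /negbTE ->]; rewrite andbF. Qed.

Lemma B'_nodes x : x \in B' -> x \in nodes N.
Proof. by rewrite in_fsetD => /andP[_ HxB]; apply: AB_nodes; rewrite in_fsetU HxB orbT. Qed.

Lemma C_notin_A' c : c \in C -> c \notin A'.
Proof. by move=> Hc; apply: notin_A'; apply: contraTN Hc => /AB_nodes/node_notin_C. Qed.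

Lemma modnet_nodes : nodes N' = (nodes N `\` A') `|` C.
Proof. by rewrite /modnet; case: ifP. Qed.

Lemma modnet_wt x y : wt N' x y =
  if (x \in A') || (y \in A') then 0
  else if x \in C then (if y \in P then beta x * kappa y else 0)
  else if y \in C then (if x \in W then - (alpha y * nu x) else 0)
  else if (x \in W) && (y \in B') then wt N x y - alpha y * nu x
  else wt N x y.
Proof. by rewrite /modnet Wset_absorbed; case: ifP. Qed.

Lemma modnet_outs : outs N' =
  if A `<=` outs N then
    ((outs N `\` (A' `|` B')) `|` C) `|` [fset u in B' | [exists r, lam N' r u != 0]]
  else outs N.
Proof. by rewrite /modnet outs_absorbed; case: ifP. Qed.

Lemma modnet_lam r u : lam N' r u =
  if A `<=` outs N then
    (if u \in C then - (alpha u * mu r)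
     else if u \in B' then lam N r u - alpha u * mu r
     else if u \in A' then 0 else lam N r u)
  else lam N r u.
Proof. by rewrite /modnet outs_absorbed; case: ifP. Qed.

Lemma modnet_nodes_keep x : x \in nodes N -> x \notin A' -> x \in nodes N'.
Proof. by move=> Hx HxA'; rewrite modnet_nodes in_fsetU in_fsetD Hx HxA'. Qed.

Lemma modnet_nodes_C c : c \in C -> c \in nodes N'.
Proof. by move=> Hc; rewrite modnet_nodes in_fsetU Hc orbT. Qed.

Lemma modnet_outs_keep v : v \in outs N -> v \notin A `|` B -> v \in outs N'.
Proof.
move=> Hv HvAB; rewrite modnet_outs; case: ifP => // _.
by rewrite !in_fsetU in_fsetD Hv andbT in_fsetU negb_or notin_A' ?notin_B'.
Qed.

Lemma modnet_outs_C c : A `<=` outs N -> c \in C -> c \in outs N'.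
Proof. by move=> HAo Hc; rewrite modnet_outs HAo !in_fsetU Hc orbT. Qed.

Lemma modnet_wt_C c y : c \in C -> y \in P -> wt N' c y = beta c * kappa y.
Proof.
move=> Hc Hy; have HyA' : y \notin A' by apply: notin_A'; apply: contraTN Hy => /AB_notin_P.
by rewrite modnet_wt (negbTE (C_notin_A' Hc)) (negbTE HyA') Hc Hy.
Qed.

Lemma modnet_wt_W_C w c : w \in W -> c \in C -> wt N' w c = - (alpha c * nu w).
Proof.
move=> Hw Hc; rewrite modnet_wt (negbTE (notin_A' (W_notin_AB Hw))) (negbTE (C_notin_A' Hc)).
by rewrite (negbTE (node_notin_C (W_nodes Hw))) Hc Hw.
Qed.

Lemma modnet_wt_W_B' w y : w \in W -> y \in B' -> wt N' w y = wt N w y - alpha y * nu w.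
Proof.
move=> Hw Hy; have HyN := B'_nodes Hy.
rewrite modnet_wt (negbTE (notin_A' (W_notin_AB Hw))) (negbTE (B'_notin_A' Hy)).
by rewrite (negbTE (node_notin_C (W_nodes Hw))) (negbTE (node_notin_C HyN)) Hw Hy.
Qed.

Lemma modnet_wt_keep x y : x \in nodes N -> y \in nodes N -> x \notin A' -> y \notin A' ->
  ~~ ((x \in W) && (y \in B')) -> wt N' x y = wt N x y.
Proof.
move=> Hx Hy HxA' HyA' HxyWB.
by rewrite modnet_wt (negbTE HxA') (negbTE HyA') !(negbTE (node_notin_C _)) // (negbTE HxyWB).
Qed.

Lemma modnet_noninput v : v \in nodes N -> v \notin A' ->
  v \notin gfnn_inputs N' -> v \notin gfnn_inputs N.
Proof.
move=> Hv HvA' Hvi'; have [/W_noninput //|HvW] := boolP (v \in W).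
have /fset0Pn[u] : gfnn_par N' v != fset0.
  by apply: contra Hvi' => /eqP Hpar; rewrite !inE Hpar eqxx andbT; apply: modnet_nodes_keep.
rewrite in_gfnn_par => /andP[_].
rewrite modnet_wt (negbTE HvA') (negbTE (node_notin_C Hv)) (negbTE HvW) /=.
by case: ifP => _; [rewrite eqxx | case: ifP => _; [rewrite eqxx | apply: gfnn_edge_noninput]].
Qed.

Local Notation anc' := (in_anc N' (outs N')).

Lemma anc_nonAB_step v : v \in nodes N -> v \notin gfnn_inputs N -> v \notin A `|` B ->
  (forall v1, wt N v1 v != 0 -> v1 \notin A `|` B -> anc' v1) ->
  (v \in P -> forall c, c \in C -> anc' c) -> anc' v.
Proof.
move=> Hv Hvi HvAB IHchild IHC; have HvA' := notin_A' HvAB.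
have Hv' := modnet_nodes_keep Hv HvA'.
have Hvn : v \in nodes N `\` gfnn_inputs N by rewrite in_fsetD Hvi Hv.
have [_ [y Hy Hvy]] := HNnd.1 v Hvn.
case/gfnn_reachP: Hvy => [Evy|[v1 Hv1 _]].
  by apply: in_anc_out Hv' _; apply: modnet_outs_keep HvAB; rewrite Evy.
have [Hv1AB|Hv1AB] := boolP (v1 \in A `|` B).
  have HvP : v \in P by rewrite (mem_P _ Hv1AB) Hv.
  have /fset0Pn[c0 Hc0] := HC0; apply: in_anc_edge Hv' _ (IHC HvP c0 Hc0).
  by rewrite modnet_wt_C // mulf_neq0 ?Hkap // beta_neq0 // !inE Hc0 orbT.
apply: in_anc_edge Hv' _ (IHchild v1 Hv1 Hv1AB).
have Hv1n := (gfnn_edge_nodes HN Hv1).2.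
by rewrite (modnet_wt_keep Hv1n Hv (notin_A' Hv1AB) HvA') // (negbTE (notin_B' HvAB)) andbF.
Qed.

Lemma anc_C_step a : a \in A -> (forall w, w \in W -> wt N w a != 0 -> anc' w) ->
  forall c, c \in C -> anc' c.
Proof.
move=> Ha IHW c Hc; have Hc' := modnet_nodes_C Hc.
have [HAo|HAo] := boolP (A `<=` outs N); first exact: in_anc_out Hc' (modnet_outs_C HAo Hc).
have [w Hw Hwa] := A_child HAo Ha; have [_ Hnu _] := HW Hw.
apply: in_anc_edge Hc' _ (IHW w Hw Hwa).
by rewrite modnet_wt_W_C // oppr_eq0 mulf_neq0 // alpha_neq0 // !inE Hc orbT.
Qed.

(* Well-founded induction towards the outputs: the ancestry of [C] comes from a child of [A],
   which lies further down than the parents [P] of [A] that need it. *)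
Lemma anc_nonAB_and_C v :
  (v \in nodes N -> v \notin gfnn_inputs N -> v \notin A `|` B -> anc' v) /\
  (v \in A -> forall c, c \in C -> anc' c).
Proof.
elim/(well_founded_ind (gfnn_child_wf HN)): v => v IH; split.
  move=> Hv Hvi HvAB; apply: anc_nonAB_step => // [v1 Hv1 Hv1AB|HvP].
    exact: (IH v1 Hv1).1 (gfnn_edge_nodes HN Hv1).2 (gfnn_edge_noninput HN Hv1) Hv1AB.
  have /fset0Pn[a0 Ha0] := HA0.
  have Ha0v : wt N a0 v != 0 by move: HvP; rewrite (mem_P (x := a0)) ?in_fsetU ?Ha0 // => /andP[].
  exact: (IH a0 Ha0v).2 Ha0.
move=> Ha; apply: anc_C_step Ha _ => w Hw Hwa.
exact: (IH w Hwa).1 (W_nodes Hw) (W_noninput Hw) (W_notin_AB Hw).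
Qed.

Lemma anc_nonAB v : v \in nodes N -> v \notin gfnn_inputs N -> v \notin A `|` B -> anc' v.
Proof. exact: (anc_nonAB_and_C v).1. Qed.

Lemma anc_C c : c \in C -> anc' c.
Proof. by have /fset0Pn[a0 Ha0] := HA0; apply: (anc_nonAB_and_C a0).2. Qed.

Lemma anc_B' v : v \in B' -> anc' v.
Proof.
move=> HvB'; have Hv := B'_nodes HvB'; have Hv' := modnet_nodes_keep Hv (B'_notin_A' HvB').
move: (HvB'); rewrite in_fsetD => /andP[]; rewrite inE negb_and => /orP[/negP //|].
rewrite /absorbable negb_and => /orP[/allPn[w Hw Hwv]|Hout_v] HvB.
  case: ifP Hwv => HwW Hwv.
    apply: in_anc_edge Hv' _ (anc_nonAB (W_nodes HwW) (W_noninput HwW) (W_notin_AB HwW)).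
    by rewrite modnet_wt_W_B' // subr_eq0 mulrC.
  have HwAB : w \notin A `|` B.
    by apply: contra Hwv => HwAB; rewrite wt_AB // in_fsetU HvB orbT.
  apply: in_anc_edge Hv' _ (anc_nonAB Hw (gfnn_edge_noninput HN Hwv) HwAB).
  by rewrite (modnet_wt_keep Hw Hv (notin_A' HwAB) (B'_notin_A' HvB')) ?HwW.
apply: in_anc_out Hv' _; rewrite modnet_outs; case: ifP Hout_v => HAo.
  case/forallPn=> r Hr; rewrite in_fsetU; apply/orP; right.
  rewrite in_fset; apply/andP; split=> //; apply/existsP; exists r.
  by rewrite modnet_lam HAo (negbTE (node_notin_C Hv)) HvB' subr_eq0 mulrC.
by move/negPn.
Qed.

Lemma absorbed_nondegenerate : gfnn_nondegenerate N'.
Proof.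
split=> [v|w].
  rewrite in_fsetD modnet_nodes in_fsetU in_fsetD => /andP[Hvi /orP[/andP[HvA' Hv]|Hc]].
    have HvA : v \notin A by apply: contra HvA' => HvA; rewrite in_fsetU HvA.
    have [HvB|HvB] := boolP (v \in B).
      apply: anc_B'; rewrite in_fsetD HvB andbT.
      by apply: contra HvA' => Hva; rewrite in_fsetU Hva orbT.
    by apply: anc_nonAB (modnet_noninput Hv HvA' Hvi) _; rewrite // in_fsetU negb_or HvA.
  exact: anc_C.
rewrite modnet_outs; case: ifP => HAo Hw; last first.
  by have [r Hr] := HNnd.2 w Hw; exists r; rewrite modnet_lam HAo.
move: Hw; rewrite !in_fsetU => /orP[/orP[Hw|Hw]|Hw].
- move: Hw; rewrite in_fsetD in_fsetU negb_or => /andP[/andP[HwA' HwB'] Hwo].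
  have [r Hr] := HNnd.2 w Hwo; exists r.
  have HwC := node_notin_C (gfnn_outs_nodes HN Hwo).
  by rewrite modnet_lam HAo (negbTE HwC) (negbTE HwB') (negbTE HwA').
- have [r Hr] := exists_mu_neq0 HAo; exists r.
  by rewrite modnet_lam HAo Hw oppr_eq0 mulf_neq0 // alpha_neq0 // !inE Hw orbT.
- by move: Hw; rewrite inE => /andP[_ /existsP].
Qed.

Lemma absorbed_modification_nondegenerate :
  is_modification rho N (A `|` absorbed) (B `\` absorbed) C N' /\ gfnn_nondegenerate N'.
Proof. by split; [apply: absorbed_modification | apply: absorbed_nondegenerate]. Qed.

End Absorb.

Unset Implicit Arguments.

(* The argument does not use that [rho] is a nonlinearity. *)
Theorem lemma4 (R : realType) (D : nat) (rho : R -> R) (N : gfnn R D)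
    (A B C : {fset nat}) :
  nonlinearity rho -> is_gfnn N -> gfnn_nondegenerate N ->
  (exists N' : gfnn R D, is_modification rho N A B C N') ->
  exists2 Bs : {fset nat}, Bs `<=` B &
    exists N' : gfnn R D,
      is_modification rho N (A `|` Bs) (B `\` Bs) C N' /\ gfnn_nondegenerate N'.
Proof.
move=> _ HN HNnd [_ [Hirr [P [zeta [alpha [beta [gamma [kappa [nu [mu
  [[HA HB HAB HA0 HPar] [HC0 HCN] [Haff Hgam] [Hkap Hwt] [HW Hout _]]]]]]]]]]]].
exists (absorbed N A B alpha nu mu); first exact: absorbed_sub.
by eexists; apply: (absorbed_modification_nondegenerate HN HNnd Hirr HA HB HAB HA0 HPar
  HC0 HCN Haff Hgam Hkap Hwt HW Hout).
Qed.
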